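(* Let $s\geq2$ and $\phi\in\mathrm{Aut}_{s-1}(H)$. Then there exists a unique $\beta=(\beta_n)_{n\in\mathbb{Z}}\in k^{\mathbb{Z}}$ such that $\phi(x^ny^s)=x^ny^s+\beta_n(x^{n+s}-x^n)$ for all $n\in\mathbb{Z}$.
   Context: Let $k$ be a field and $0\neq q\in k$ not a root of unity. $H=k_q[x,x^{-1},y]$ is the $k$-algebra generated by $x,x^{-1},y$ with $xx^{-1}=x^{-1}x=1$, $yx=qxy$, a Hopf algebra with $\Delta(x)=x\otimes x$, $\Delta(x^{-1})=x^{-1}\otimes x^{-1}$, $\Delta(y)=y\otimes x+1\otimes y$, $\varepsilon(x)=1$, $\varepsilon(y)=0$; $\{x^ny^m:n\in\mathbb{Z},m\in\mathbb{N}\}$ is a $k$-basis. $H_0=\mathrm{span}\{x^n\}$, $H(m)=H_0y^m$. $\mathrm{Aut}_c(H)$ is the group of coalgebra automorphisms of $H$, and for $m\geq1$, $\mathrm{Aut}_m(H)=\{\phi\in\mathrm{Aut}_c(H):\phi(h)=h\text{ for all }h\in\sum_{i=0}^mH(i)\}$. *)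

From HB Require Import structures.
From mathcomp Require Import all_boot all_order all_algebra.
From mathcomp Require Import finmap.
From mathcomp.multinomials Require Import monalg.
Set Implicit Arguments. Unset Strict Implicit. Unset Printing Implicit Defensive.
Import Order.TTheory GRing.Theory Num.Theory.
Local Open Scope ring_scope.

(* Index (n, m) : int * nat stands for the basis monomial x^n y^m of
   H = k_q[x, x^-1, y]. *)
Definition idx : Type := (int * nat)%type.

Definition Hq (k : fieldType) : Type := {malg k[idx]}.
(* The underlying k-vector space of H (x) H, with basis
   {x^a y^b (x) x^c y^d}. *)
Definition HH (k : fieldType) : Type := {malg k[(idx * idx)%type]}.

Definition bas (k : fieldType) (a : idx) : Hq k := << (1 : k) *g a >>.
Definition basT (k : fieldType) (ab : idx * idx) : HH k := << (1 : k) *g ab >>.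

(* product of monomials in H:  (x^a y^b)(x^c y^d) = q^(b c) x^(a+c) y^(b+d),
   from y x = q x y. *)
Definition idxmul (a b : idx) : idx := (a.1 + b.1, (a.2 + b.2)%N).
Definition mulw (k : fieldType) (q : k) (a b : idx) : k := q ^ (a.2%:Z * b.1).

Definition mulT (k : fieldType) (q : k) (u v : HH k) : HH k :=
  \sum_(i <- msupp u) \sum_(j <- msupp v)
     << u@_i * v@_j * (mulw q i.1 j.1 * mulw q i.2 j.2)
        *g (idxmul i.1 j.1, idxmul i.2 j.2) >>.

Definition DeltaY (k : fieldType) : HH k :=
  basT k ((0, 1%N), (1, 0%N)) + basT k ((0, 0%N), (0, 1%N)).

(* Delta is the algebra map with Delta(x^(+-1)) = x^(+-1) (x) x^(+-1) and
   Delta(y) = y (x) x + 1 (x) y, so on the basis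
   Delta(x^n y^m) = Delta(x)^n Delta(y)^m = (x^n (x) x^n) * Delta(y)^m. *)
Definition Delta_bas (k : fieldType) (q : k) (a : idx) : HH k :=
  mulT q (basT k ((a.1, 0%N), (a.1, 0%N)))
         (iter a.2 (mulT q (DeltaY k)) (basT k ((0, 0%N), (0, 0%N)))).

Definition Delta (k : fieldType) (q : k) (h : Hq k) : HH k :=
  \sum_(a <- msupp h) h@_a *: Delta_bas q a.

Definition eps (k : fieldType) (h : Hq k) : k :=
  \sum_(a <- msupp h) h@_a * (a.2 == 0%N)%:R.

Definition tens (k : fieldType) (u v : Hq k) : HH k :=
  \sum_(a <- msupp u) \sum_(b <- msupp v) << u@_a * v@_b *g (a, b) >>.
Definition tmap (k : fieldType) (f g : Hq k -> Hq k) (T : HH k) : HH k :=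
  \sum_(ab <- msupp T) T@_ab *: tens (f (bas k ab.1)) (g (bas k ab.2)).

Definition is_coalg_aut (k : fieldType) (q : k) (phi : Hq k -> Hq k) : Prop :=
  [/\ (forall (c : k) (u v : Hq k), phi (c *: u + v) = c *: phi u + phi v),
      bijective phi,
      (forall h, Delta q (phi h) = tmap phi phi (Delta q h)) &
      (forall h, eps (phi h) = eps h)].

(* h lies in sum_(i=0)^m H(i), H(i) = H_0 y^i *)
Definition in_filt (k : fieldType) (m : nat) (h : Hq k) : Prop :=
  forall a, a \in msupp h -> (a.2 <= m)%N.

Definition in_Aut (k : fieldType) (q : k) (m : nat) (phi : Hq k -> Hq k) : Prop :=
  is_coalg_aut q phi /\ (forall h, in_filt m h -> phi h = h).

(* Write phi (x^n y^s) = x^n y^s + w.  Since phi fixes every x^a y^i with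
   i < s and commutes with Delta, applying (phi (x) phi) to
     Delta (x^n y^s) = sum_i [s choose i]_q x^n y^i (x) x^(n+i) y^(s-i)
   leaves only the two extreme terms, so w is skew-primitive:
     Delta w = x^n (x) w + w (x) x^(n+s).
   Comparing coefficients of x^e y^i (x) x^c y^j in this identity kills every
   coefficient of w of positive y-degree (degree 1 because s <> 1, degree
   M >= 2 because [M choose 1]_q = (1 - q^M)/(1 - q) <> 0) and forces
   w = beta (x^(n+s) - x^n); beta is unique as x^(n+s) - x^n <> 0. *)

From HB Require Import structures.
From mathcomp Require Import all_boot all_order all_algebra.
From mathcomp Require Import finmap.
From mathcomp.multinomials Require Import monalg.
From mathcomp Require Import ring zify.
From Stdlib Require Import FunctionalExtensionality.
Import Order.TTheory GRing.Theory Num.Theory.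
Local Open Scope ring_scope.
Set Implicit Arguments. Unset Strict Implicit.

Section LinearExtension.
Variables (k : fieldType) (K : choiceType) (V : lmodType k) (F : K -> V).

Definition linext (g : {malg k[K]}) : V := \sum_(a <- msupp g) g@_a *: F a.

Lemma linextEw (d : {fset K}) g : (msupp g `<=` d)%fset ->
  linext g = \sum_(a <- d) g@_a *: F a.
Proof.
move=> sub; apply: big_fset_incl => // a _ /mcoeff_outdom ->.
by rewrite scale0r.
Qed.

Lemma linext_is_linear : linear linext.
Proof.
move=> c u v; pose d := (msupp u `|` msupp v)%fset.
have su : (msupp u `<=` d)%fset by apply: fsubsetUl.
have sv : (msupp v `<=` d)%fset by apply: fsubsetUr.
have suv : (msupp (c *: u + v) `<=` d)%fset.
  apply: fsubset_trans (msuppD_le _ _) _; apply/fsubUsetP; split=> //.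
  exact: fsubset_trans (msuppZ_le _ _) su.
rewrite (linextEw suv) (linextEw su) (linextEw sv) scaler_sumr -big_split /=.
by apply: eq_bigr => a _; rewrite mcoeffD mcoeffZ scalerDl scalerA.
Qed.

HB.instance Definition _ :=
  GRing.isLinear.Build k {malg k[K]} V *:%R linext linext_is_linear.

Lemma linextU c a : linext << c *g a >> = c *: F a.
Proof.
rewrite /linext msuppU; case: eqP => [->|_]; first by rewrite big_seq_fset0 scale0r.
by rewrite big_seq_fset1 mcoeffUU.
Qed.

End LinearExtension.

Section LinextInFunction.
Variables (k : fieldType) (K : choiceType) (V : lmodType k).

Lemma eq_linext (F1 F2 : K -> V) : F1 =1 F2 -> linext F1 =1 linext F2.
Proof. by move=> eqF g; apply: eq_bigr => a _; rewrite eqF. Qed.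

Lemma linext_linear_fun (F1 F2 : K -> V) c g :
  linext (fun a => c *: F1 a + F2 a) g = c *: linext F1 g + linext F2 g.
Proof.
rewrite /linext scaler_sumr -big_split; apply: eq_bigr => a _ /=.
by rewrite scalerDr !scalerA mulrC.
Qed.

End LinextInFunction.

Lemma sum_msupp_at (k : fieldType) (K : choiceType) (g : {malg k[K]}) (f : K -> k) a0 :
  (forall a, a != a0 -> f a = 0) ->
  \sum_(a <- msupp g) g@_a * f a = g@_a0 * f a0.
Proof.
move=> f0; rewrite (@big_fset_incl _ _ _ _ _ (msupp g `|` [fset a0])%fset); last 2 first.
- exact: fsubsetUl.
- by move=> a _ /mcoeff_outdom ->; rewrite mul0r.
rewrite (big_fsetD1 a0) ?inE ?eqxx ?orbT //= big1_fset ?addr0 // => a.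
by rewrite !inE => /andP [/f0 ->]; rewrite mulr0.
Qed.

Lemma mcoeff_linext (k : fieldType) (K K' : choiceType) (F : K -> {malg k[K']}) g t :
  (linext F g)@_t = \sum_(a <- msupp g) g@_a * (F a)@_t.
Proof. by rewrite /linext raddf_sum; apply: eq_bigr => a _ /=; rewrite mcoeffZ. Qed.

Lemma scaleU (k : fieldType) (K : choiceType) (c : k) (a : K) :
  << c *g a >> = c *: << 1 *g a >>.
Proof. by apply/malgP => t; rewrite mcoeffZ !mcoeffU mulr_natr. Qed.

Lemma sum_ord_at (V : nmodType) n (f : nat -> V) i :
  (forall j, j != i -> f j = 0) -> \sum_(j < n) f j = if (i < n)%N then f i else 0.
Proof.
move=> f0; case: ltnP => [lt_in | le_ni].
  rewrite (bigD1 (Ordinal lt_in)) //= big1 ?addr0 // => j ji; apply: f0.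
  by apply: contra ji => /eqP eq_ji; apply/eqP/val_inj.
by apply: big1 => j _; apply: f0; rewrite neq_ltn (leq_trans (ltn_ord j) le_ni).
Qed.

Lemma sum_ord_ends (V : nmodType) m (f : nat -> V) :
  (forall i, (0 < i <= m)%N -> f i = 0) ->
  \sum_(i < m.+2) f i = f 0%N + f m.+1.
Proof.
move=> f0; rewrite big_ord_recl big_ord_recr big1 => [|i _].
  by rewrite lift0 /= add0r.
by rewrite lift0 f0 //=; exact: ltn_ord.
Qed.

Section Qbinomial.
Variables (k : fieldType) (q : k).

Fixpoint qbinom (m i : nat) : k :=
  match m with
  | 0 => (i == 0)%:R
  | m'.+1 => (if i is i'.+1 then qbinom m' i' else 0) + q ^+ i * qbinom m' i
  end.

Lemma qbinomS m i :
  qbinom m.+1 i = (if i is i'.+1 then qbinom m i' else 0) + q ^+ i * qbinom m i.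
Proof. by []. Qed.

Lemma qbinom_gt m i : (m < i)%N -> qbinom m i = 0.
Proof.
elim: m i => [|m IH] [|i] //= lt_mi.
by rewrite IH // IH ?mulr0 ?addr0 // ltnW.
Qed.

Lemma qbinom_n0 m : qbinom m 0 = 1.
Proof. by elim: m => [|m IH] //=; rewrite IH expr0 mulr1 add0r. Qed.

Lemma qbinom_nn m : qbinom m m = 1.
Proof. by elim: m => [|m IH] //=; rewrite IH qbinom_gt // mulr0 addr0. Qed.

Lemma qbinom_n1 m : (1 - q) * qbinom m 1 = 1 - q ^+ m.
Proof.
elim: m => [|m IH] /=; first by rewrite mulr0 expr0 subrr.
rewrite qbinom_n0 expr1 exprS.
transitivity ((1 - q) + q * ((1 - q) * qbinom m 1)); first ring.
by rewrite IH; ring.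
Qed.

Lemma qbinom_n1_neq0 m : q ^+ m != 1 -> qbinom m 1 != 0.
Proof.
apply: contra => /eqP qbinom0; have := qbinom_n1 m.
by rewrite qbinom0 mulr0 => /eqP; rewrite eq_sym subr_eq0 eq_sym.
Qed.

End Qbinomial.

Arguments qbinom {k} q m i : simpl never.

Section Tensor.
Variable k : fieldType.

Lemma mcoeff_bas (a b : idx) : (bas k a)@_b = (a == b)%:R.
Proof. by rewrite /bas mcoeffU. Qed.

Lemma mcoeff_basT (a b : idx * idx) : (basT k a)@_b = (a == b)%:R.
Proof. by rewrite /basT mcoeffU. Qed.

Lemma linext_bas (V : lmodType k) (F : idx -> V) a : linext F (bas k a) = F a.
Proof. by rewrite /bas linextU scale1r. Qed.

Lemma linext_basT (V : lmodType k) (F : idx * idx -> V) a : linext F (basT k a) = F a.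
Proof. by rewrite /basT linextU scale1r. Qed.

Lemma tensE (u v : Hq k) :
  tens u v = linext (fun a => linext (fun b => basT k (a, b)) v) u.
Proof.
rewrite /tens /linext; apply: eq_bigr => a _; rewrite scaler_sumr.
by apply: eq_bigr => b _; rewrite scalerA [LHS]scaleU.
Qed.

Lemma mcoeff_tens (u v : Hq k) b c : (tens u v)@_(b, c) = u@_b * v@_c.
Proof.
rewrite tensE mcoeff_linext (sum_msupp_at _ (a0 := b)) => [|a ab].
  rewrite mcoeff_linext (sum_msupp_at _ (a0 := c)) => [|a ac].
    by rewrite mcoeff_basT eqxx mulr1.
  by rewrite mcoeff_basT xpair_eqE (negbTE ac) andbF.
rewrite mcoeff_linext big1 ?mulr0 // => a' _.
by rewrite mcoeff_basT xpair_eqE (negbTE ab) mulr0n mulr0.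
Qed.

Lemma tens_bas a b : tens (bas k a) (bas k b) = basT k (a, b).
Proof.
apply/malgP => -[a' b'].
by rewrite mcoeff_tens !mcoeff_bas mcoeff_basT xpair_eqE -natrM mulnb.
Qed.

Lemma tensBl (u1 u2 v : Hq k) : tens (u1 - u2) v = tens u1 v - tens u2 v.
Proof. by rewrite !tensE raddfB. Qed.

Lemma tens_is_linear (u : Hq k) : linear (tens u).
Proof.
move=> c v1 v2; rewrite !tensE -linext_linear_fun.
by apply: eq_linext => a; rewrite linearP.
Qed.

HB.instance Definition _ (u : Hq k) :=
  GRing.isLinear.Build k (Hq k) (HH k) *:%R (tens u) (tens_is_linear u).

Lemma tensBr (u v1 v2 : Hq k) : tens u (v1 - v2) = tens u v1 - tens u v2.
Proof. exact: linearB. Qed.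

Lemma tmapE (f g : Hq k -> Hq k) :
  tmap f g = linext (fun ab : idx * idx => tens (f (bas k ab.1)) (g (bas k ab.2))).
Proof. by []. Qed.

End Tensor.

Section Comultiplication.
Variables (k : fieldType) (q : k).

Lemma mulT_basT (i j : idx * idx) :
  mulT q (basT k i) (basT k j) =
  (mulw q i.1 j.1 * mulw q i.2 j.2) *: basT k (idxmul i.1 j.1, idxmul i.2 j.2).
Proof.
rewrite /mulT /basT !msuppU oner_eq0 !big_seq_fset1 !mcoeffUU !mul1r.
exact: scaleU.
Qed.

Lemma mulTE (u v : HH k) :
  mulT q u v = linext (fun i => linext (fun j => mulT q (basT k i) (basT k j)) v) u.
Proof.
rewrite /linext; under [RHS]eq_bigr => i _ do under eq_bigr => j _ do rewrite mulT_basT.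
rewrite /mulT; apply: eq_bigr => i _; rewrite scaler_sumr.
by apply: eq_bigr => j _; rewrite !scalerA mulrA [LHS]scaleU.
Qed.

Lemma mulT_is_linear (u : HH k) : linear (mulT q u).
Proof.
move=> c v1 v2; rewrite (mulTE u (c *: v1 + v2)) (mulTE u v1) (mulTE u v2).
rewrite -[RHS]linext_linear_fun.
by apply: eq_linext => i; rewrite linearP.
Qed.

HB.instance Definition _ (u : HH k) :=
  GRing.isLinear.Build k (HH k) (HH k) *:%R (mulT q u) (mulT_is_linear u).

Lemma mulTDl (u1 u2 v : HH k) : mulT q (u1 + u2) v = mulT q u1 v + mulT q u2 v.
Proof. by rewrite (mulTE (u1 + u2)) (mulTE u1) (mulTE u2); exact: linearD. Qed.

Lemma mulT_DeltaY_basT (i M : nat) : (i <= M)%N ->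
  mulT q (DeltaY k) (basT k ((0, i), (i%:Z, (M - i)%N))) =
  basT k ((0, i.+1), (i.+1%:Z, (M - i)%N)) + q ^+ i *: basT k ((0, i), (i%:Z, (M.+1 - i)%N)).
Proof.
(* Unlocated rewrites (and [congr]) in such goals make unification unfold the
   [malg] operations, which is extremely slow; hence the located patterns. *)
move=> le_iM; rewrite /DeltaY mulTDl [X in X + _]mulT_basT [X in _ + X]mulT_basT.
rewrite /mulw /idxmul /= mulr0 mul0r expr0z mul1r mul1r scale1r.
by rewrite !add0r !add0n !add1n -intS mul1r subSn.
Qed.

Lemma DeltaY_exp M :
  iter M (mulT q (DeltaY k)) (basT k ((0, 0%N), (0, 0%N))) =
  \sum_(i < M.+1) qbinom q M i *: basT k ((0, (i : nat)), ((i : nat)%:Z, (M - i)%N)).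
Proof.
elim: M => [|M IH]; first by rewrite big_ord1 /= scale1r.
rewrite iterS IH linear_sum.
under eq_bigr => i _ do
  rewrite linearZ /= (mulT_DeltaY_basT (leq_ord i)) scalerDr scalerA.
under [RHS]eq_bigr => i _ do rewrite qbinomS scalerDl.
rewrite !big_split /= [X in _ = X + _]big_ord_recl [X in _ = _ + X]big_ord_recr /=.
rewrite (qbinom_gt q (ltnSn M)) mulr0 [X in _ = X + _ + _]scale0r.
rewrite [X in _ = X + _]add0r [X in _ = _ + (_ + X)]scale0r [X in _ = _ + X]addr0.
by apply: f_equal2; apply: eq_bigr => i _; rewrite 1?mulrC.
Qed.

Lemma Delta_bas_sum (a : int) M :
  Delta_bas q (a, M) =
  \sum_(i < M.+1) qbinom q M i *: basT k ((a, (i : nat)), (a + (i : nat)%:Z, (M - i)%N)).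
Proof.
rewrite /Delta_bas DeltaY_exp linear_sum; apply: eq_bigr => i _.
rewrite linearZ /= mulT_basT /mulw /idxmul /= mulr0 mul0r expr0z mulr1 scale1r.
by rewrite addr0 !add0n.
Qed.

Lemma DeltaE : Delta q =1 linext (Delta_bas q).
Proof. by []. Qed.

Lemma mcoeff_Delta_bas (a : int) M b i c j :
  (Delta_bas q (a, M))@_((b, i), (c, j)) =
  ((a == b) && (a + i%:Z == c) && (M == i + j)%N)%:R * qbinom q M i.
Proof.
rewrite Delta_bas_sum raddf_sum /=.
under eq_bigr => i' _ do rewrite mcoeffZ mcoeff_basT.
rewrite (@sum_ord_at _ _ (fun i' : nat =>
  qbinom q M i' * (((a, i'), (a + i'%:Z, (M - i')%N)) == ((b, i), (c, j)))%:R) i).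
  case: ltnP => [lt_iM | lt_Mi]; last by rewrite qbinom_gt ?mulr0.
  rewrite mulrC !xpair_eqE eqxx andbT -(eqn_add2l i) subnKC //.
  by rewrite -andbA.
by move=> i' ne_i'i; rewrite !xpair_eqE (negbTE ne_i'i) andbF mulr0.
Qed.

Lemma mcoeff_Delta (w : Hq k) b i c j :
  (Delta q w)@_((b, i), (c, j)) =
  w@_(b, (i + j)%N) * ((b + i%:Z == c)%:R * qbinom q (i + j) i).
Proof.
rewrite DeltaE mcoeff_linext (sum_msupp_at _ (a0 := (b, (i + j)%N))) => [|[a M] neq].
  by rewrite mcoeff_Delta_bas !eqxx andbT.
rewrite mcoeff_Delta_bas (_ : _ && _ = false) ?mul0r //.
by apply: contraNF neq => /andP [/andP [/eqP -> _] /eqP ->].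
Qed.

End Comultiplication.

Section FilteredAutomorphisms.
Variables (k : fieldType) (q : k).

Lemma in_Aut_fix_bas m (phi : Hq k -> Hq k) (a : idx) :
  in_Aut q m phi -> (a.2 <= m)%N -> phi (bas k a) = bas k a.
Proof.
case=> _ phi_fix le_am; apply: phi_fix => a'.
by rewrite /bas msuppU oner_eq0 in_fset1 => /eqP ->.
Qed.

Lemma Delta_Aut_defect s (phi : Hq k -> Hq k) (n : int) (w : Hq k) :
  (0 < s)%N -> in_Aut q s.-1 phi -> phi (bas k (n, s)) = bas k (n, s) + w ->
  Delta q w = tens (bas k (n, 0%N)) w + tens w (bas k (n + s%:Z, 0%N)).
Proof.
case: s => // m _ phi_Aut phi_h; have [[_ _ phi_Delta _] _] := phi_Aut.
have phi_fix a : (a.2 <= m)%N -> phi (bas k a) = bas k a.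
  exact: in_Aut_fix_bas phi_Aut.
set h := bas k (n, m.+1) in phi_h *.
have w_def : w = phi h - h by rewrite phi_h addrC addKr.
have Delta_w : Delta q w = Delta q (phi h) - Delta q h.
  by rewrite w_def !DeltaE; exact: linearB.
rewrite Delta_w phi_Delta tmapE DeltaE /h linext_bas Delta_bas_sum linear_sum -sumrB.
under eq_bigr => i _ do rewrite linearZ /= linext_basT /= -tens_bas -scalerBr.
rewrite (@sum_ord_ends _ _ (fun i : nat => qbinom q m.+1 i *:
  (tens (phi (bas k (n, i))) (phi (bas k (n + i%:Z, (m.+1 - i)%N))) -
   tens (bas k (n, i)) (bas k (n + i%:Z, (m.+1 - i)%N))))) => [|i /andP [i_gt0 le_im]].
  rewrite qbinom_n0 qbinom_nn [X in X + _ = _]scale1r [X in _ + X = _]scale1r.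
  rewrite (addr0 n) subn0 subnn; apply: f_equal2.
    by rewrite (phi_fix (n, 0%N)) // -tensBr -w_def.
  by rewrite (phi_fix (n + m.+1%:Z, 0%N)) // -tensBl -w_def.
rewrite (phi_fix (n, i)) // (phi_fix (n + i%:Z, (m.+1 - i)%N)); last by rewrite /=; lia.
by rewrite subrr scaler0.
Qed.

Hypothesis q_not_root1 : forall n : nat, (1 < n)%N -> q ^+ n != 1.

Lemma skew_primitive_line (a b : int) (w : Hq k) : b != a + 1 ->
  Delta q w = tens (bas k (a, 0%N)) w + tens w (bas k (b, 0%N)) ->
  w = (- w@_(a, 0%N)) *: (bas k (b, 0%N) - bas k (a, 0%N)).
Proof.
move=> b_neq Delta_w.
have coef e i c j : w@_(e, (i + j)%N) * ((e + i%:Z == c)%:R * qbinom q (i + j) i) =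
    ((a, 0%N) == (e, i))%:R * w@_(c, j) + w@_(e, i) * ((b, 0%N) == (c, j))%:R.
  rewrite -mcoeff_Delta Delta_w mcoeffD; apply: f_equal2.
    by rewrite mcoeff_tens mcoeff_bas.
  by rewrite mcoeff_tens mcoeff_bas.
apply/malgP => -[e M]; rewrite mcoeffZ mcoeffB 2!mcoeff_bas.
case: M => [|[|M]].
- have := coef a 0 e 0.
  rewrite add0n addr0 qbinom_n0 mulr1 eqxx mul1r !xpair_eqE !eqxx !andbT => coef_a.
  have -> : w@_(e, 0%N) = w@_(a, 0%N) * (a == e)%:R - w@_(a, 0%N) * (b == e)%:R.
    by rewrite coef_a addrK.
  ring.
- rewrite !xpair_eqE /= !andbF subrr mulr0.
  have := coef e 1 (e + 1) 0.
  rewrite addn0 eqxx mul1r qbinom_nn mulr1 !xpair_eqE /= andbF mul0r add0r andbT.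
  move=> coef_e1; have := coef e 0 e 1.
  rewrite add0n addr0 eqxx mul1r qbinom_n0 mulr1 !xpair_eqE /= andbT andbF mulr0 addr0.
  case: (eqVneq a e) => [ae _ | ne_ae]; last by rewrite mul0r.
  by move: coef_e1; rewrite -ae (negbTE b_neq) mulr0.
rewrite !xpair_eqE /= !andbF subrr mulr0.
have := coef e 1 (e + 1) M.+1.
rewrite add1n eqxx mul1r !xpair_eqE /= !andbF mul0r mulr0 addr0 => /eqP.
by rewrite mulf_eq0 (negbTE (qbinom_n1_neq0 (q_not_root1 _))) // orbF => /eqP.
Qed.

Lemma Aut_bas_line s (phi : Hq k -> Hq k) (n : int) :
  (1 < s)%N -> in_Aut q s.-1 phi ->
  phi (bas k (n, s)) = bas k (n, s) +
    (- (phi (bas k (n, s)) - bas k (n, s))@_(n, 0%N)) *: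
      (bas k (n + s%:Z, 0%N) - bas k (n, 0%N)).
Proof.
move=> s_gt1 phi_Aut; rewrite -[in RHS]skew_primitive_line.
- by rewrite addrC subrK.
- by rewrite (inj_eq (addrI n)) eqz_nat gtn_eqF.
by apply: Delta_Aut_defect (ltnW s_gt1) phi_Aut _; rewrite addrC subrK.
Qed.

End FilteredAutomorphisms.

Lemma mcoeff_scale_bas_diff (k : fieldType) (c : k) (a b : idx) :
  a != b -> (c *: (bas k a - bas k b))@_a = c.
Proof.
by move=> ab; rewrite mcoeffZ mcoeffB !mcoeff_bas eqxx eq_sym (negbTE ab) subr0 mulr1.
Qed.

Theorem lemma3p5 (k : fieldType) (q : k) (hq0 : q != 0)
    (hq : forall n : nat, (0 < n)%N -> q ^+ n != 1)
    (s : nat) (hs : (2 <= s)%N) (phi : Hq k -> Hq k)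
    (hphi : in_Aut q s.-1 phi) :
  exists! beta : int -> k, forall n : int,
    phi (bas k (n, s)) =
      bas k (n, s) + beta n *: (bas k (n + s%:Z, 0%N) - bas k (n, 0%N)).
Proof.
have q_not_root1 m : (1 < m)%N -> q ^+ m != 1 by move/ltnW; exact: hq.
exists (fun n => - (phi (bas k (n, s)) - bas k (n, s))@_(n, 0%N)).
split=> [n | beta phi_beta]; first exact: (Aut_bas_line q_not_root1 n hs hphi).
apply: functional_extensionality => n.
have n_neq : (n + s%:Z, 0%N) != (n, 0%N).
  by rewrite xpair_eqE andbT -[X in _ != X]addr0 (inj_eq (addrI n)) eqz_nat -lt0n ltnW.
have := phi_beta n; rewrite {1}(Aut_bas_line q_not_root1 n hs hphi) => /addrI scale_eq.
by rewrite -[LHS](mcoeff_scale_bas_diff _ n_neq) scale_eq mcoeff_scale_bas_diff.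
Qed.
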